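(* Let $K\subset\mathbb{R}^n$ and $C\subset\mathbb{R}^m$ be nonempty, convex, closed and bounded sets, and let $f,h:\mathbb{R}^n\times\mathbb{R}^m\to\mathbb{R}$ be continuous functions such that, for every $y\in K$, $f(y,\cdot)$ and $h(y,\cdot)$ are convex, and such that $f$ takes only positive values. Let $\varepsilon>\varepsilon'>0$, let $y_\varepsilon$ (resp. $y_{\varepsilon'}$) be an optimal solution of $(\mathcal{P}_\varepsilon)$ (resp. $(\mathcal{P}_{\varepsilon'})$), and let $x_\varepsilon\in\mathcal{S}_\varepsilon(y_\varepsilon)$, $x_{\varepsilon'}\in\mathcal{S}_{\varepsilon'}(y_{\varepsilon'})$. Let $y^*$ be an optimal solution of $(\widetilde{\mathcal{P}})$ and $x^*\in\mathcal{S}(y^* )$. Then $$f^2(y_\varepsilon,x_\varepsilon)\le f^2(y_{\varepsilon'},x_{\varepsilon'})\le f^2(y^*,x^* ).$$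
   Context: $f^2=(f)^2$. For $y\in K$: $\mathcal{S}(y)=\operatorname{argmin}\{h(y,z)\mid z\in C\}$; for $\varepsilon>0$, $\mathcal{S}_\varepsilon(y)=\operatorname{argmin}\{h(y,z)+\varepsilon f^2(y,z)\mid z\in C\}$; $\widetilde{\mathcal{S}}(y)=\operatorname{argmin}\{f^2(y,z)\mid z\in\mathcal{S}(y)\}$. $(\mathcal{P}_\varepsilon)$: maximize $f(y,x)$ over $y\in K$, $x\in\mathcal{S}_\varepsilon(y)$; $y_\varepsilon\in K$ is optimal if $f(y_\varepsilon,x')\ge f(y,x)$ for all $x'\in\mathcal{S}_\varepsilon(y_\varepsilon)$, $y\in K$, $x\in\mathcal{S}_\varepsilon(y)$. $(\widetilde{\mathcal{P}})$: maximize $f(y,x)$ over $y\in K$, $x\in\widetilde{\mathcal{S}}(y)$; $y^*\in K$ is optimal if $f(y^*,x')\ge f(y,x)$ for all $x'\in\widetilde{\mathcal{S}}(y^* )$, $y\in K$, $x\in\widetilde{\mathcal{S}}(y)$. *)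

From HB Require Import structures.
From mathcomp Require Import all_boot all_order all_algebra.
From mathcomp Require Import all_classical all_reals all_analysis.
Set Implicit Arguments. Unset Strict Implicit. Unset Printing Implicit Defensive.
Import Order.TTheory GRing.Theory Num.Theory.
Import numFieldNormedType.Exports.
Local Open Scope classical_set_scope.
Local Open Scope ring_scope.

Section Bilevel.
Variables (R : realType) (n m : nat).
Notation Vn := 'rV[R]_n.
Notation Vm := 'rV[R]_m.

Definition convex_set_in (k : nat) (A : set 'rV[R]_k) : Prop :=
  forall x y (t : R), A x -> A y -> 0 <= t -> t <= 1 ->
    A (t *: x + (1 - t) *: y).

Definition convex_fun_on (k : nat) (g : 'rV[R]_k -> R) : Prop :=
  forall x y (t : R), 0 <= t -> t <= 1 ->
    g (t *: x + (1 - t) *: y) <= t * g x + (1 - t) * g y.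

Definition argmin_set (k : nat) (g : 'rV[R]_k -> R) (A : set 'rV[R]_k)
  : set 'rV[R]_k :=
  [set z | A z /\ forall z', A z' -> g z <= g z'].

Variables (C : set Vm) (f h : Vn -> Vm -> R).

Definition f2 (y : Vn) (x : Vm) : R := (f y x) ^+ 2.

Definition S_ (y : Vn) : set Vm := argmin_set (h y) C.
Definition S_eps (eps : R) (y : Vn) : set Vm :=
  argmin_set (fun z => h y z + eps * f2 y z) C.
Definition S_tilde (y : Vn) : set Vm := argmin_set (f2 y) (S_ y).

Definition optimal_P_eps (K : set Vn) (eps : R) (ye : Vn) : Prop :=
  K ye /\ forall x' y x, S_eps eps ye x' -> K y -> S_eps eps y x ->
    f y x <= f ye x'.

Definition optimal_P_tilde (K : set Vn) (ys : Vn) : Prop :=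
  K ys /\ forall x' y x, S_tilde ys x' -> K y -> S_tilde y x ->
    f y x <= f ys x'.

End Bilevel.

From HB Require Import structures.
From mathcomp Require Import all_boot all_order all_algebra.
From mathcomp Require Import all_classical all_reals all_analysis.
From mathcomp Require Import lra.
Set Implicit Arguments. Unset Strict Implicit. Unset Printing Implicit Defensive.
Import Order.TTheory GRing.Theory Num.Theory.
Import numFieldNormedType.Exports.
Local Open Scope classical_set_scope.
Local Open Scope ring_scope.

(* Adding the optimality inequalities of the penalized lower-level problems
   [h + a f^2] and [h + b f^2], a < b, at the same upper-level point shows
   that [f^2] is smaller at the minimizer with the larger penalty; likewise a
   minimizer of [h + e f^2] has smaller [f^2] than any minimizer of [h].
   Upper-level optimality transports these comparisons from [y_eps] to
   [y_eps'] and from [y_eps'] to [y*], and since [f > 0], bounds on [f] and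
   on [f^2] are equivalent.  The auxiliary lower-level minimizers exist by
   compactness of [C] and continuity. *)

Section Argmin.
Variables (R : realType) (k : nat).
Implicit Types (g p : 'rV[R]_k -> R) (A : set 'rV[R]_k).

Lemma argmin_nonempty g A :
  A !=set0 -> compact A -> continuous g -> argmin_set g A !=set0.
Proof.
move=> A0 cA cg.
have [c Ac minc] := EVT_min_rV A0 cA (continuous_subspaceT cg).
exists c; split; first by rewrite inE in Ac.
by move=> z Az; apply: minc; rewrite inE.
Qed.

Lemma compact_argmin g A :
  compact A -> continuous g -> compact (argmin_set g A).
Proof.
move=> cA cg.
have -> : argmin_set g A = A `&` \bigcap_(z in A) (g @^-1` [set x | x <= g z]).
  by apply/seteqP; split=> z [Az minz]; split.
apply: compact_closedI cA (closed_bigI _) => z _.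
by move/continuous_closedP: cg; apply; exact: closed_le.
Qed.

Lemma argmin_penalty_antitone g p A (a b : R) x y : a < b ->
  argmin_set (fun z => g z + b * p z) A x ->
  argmin_set (fun z => g z + a * p z) A y -> p x <= p y.
Proof.
move=> ab [Ax minx] [Ay miny].
have := minx y Ay; have := miny x Ax; nra.
Qed.

Lemma argmin_penalty_le g p A (e : R) x y : 0 < e ->
  argmin_set (fun z => g z + e * p z) A x -> argmin_set g A y -> p x <= p y.
Proof.
move=> e0 [Ax minx] [Ay miny].
have := minx y Ay; have := miny x Ax; nra.
Qed.

End Argmin.

Lemma continuous_sectionr {R : realType} {n m : nat}
    {F : 'rV[R]_n -> 'rV[R]_m -> R} (y : 'rV[R]_n) :
  continuous (fun p : 'rV[R]_n * 'rV[R]_m => F p.1 p.2) -> continuous (F y).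
Proof.
move=> Fc z; apply: (continuous_comp (f := fun z => (y, z))) (Fc (y, z)).
apply: (@cvg_pair _ _ _ (nbhs z) (nbhs y) (nbhs z)).
- exact: cvg_cst.
- exact: cvg_id.
Qed.

Section Bilevel.
Context {R : realType} {n m : nat}.
Context {C : set 'rV[R]_m} {f h : 'rV[R]_n -> 'rV[R]_m -> R}.
Hypothesis C0 : C !=set0.
Hypothesis Ccompact : compact C.
Hypothesis fc : continuous (fun p : 'rV[R]_n * 'rV[R]_m => f p.1 p.2).
Hypothesis hc : continuous (fun p : 'rV[R]_n * 'rV[R]_m => h p.1 p.2).
Hypothesis f_gt0 : forall y x, 0 < f y x.

Lemma ler_f2 y x y' x' : (f2 f y x <= f2 f y' x') = (f y x <= f y' x').
Proof. by rewrite /f2 ler_sqr // nnegrE ltW. Qed.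

Lemma continuous_f2 y : continuous (f2 f y).
Proof.
move=> z; change {for z, continuous (f y \* f y)}.
by apply: continuousM; exact: continuous_sectionr fc z.
Qed.

Lemma S_eps_nonempty eps y : S_eps C f h eps y !=set0.
Proof.
apply: argmin_nonempty => // z.
change {for z, continuous (h y + (fun=> eps) \* f2 f y)}.
apply: continuousD; first exact: continuous_sectionr hc z.
by apply: continuousM; [exact: cst_continuous | exact: continuous_f2].
Qed.

Lemma S_tilde_nonempty y : S_tilde C f h y !=set0.
Proof.
have hyc := continuous_sectionr (y := y) hc.
apply: argmin_nonempty; last exact: continuous_f2.
- exact: argmin_nonempty.
- exact: compact_argmin.
Qed.

Lemma f2_S_eps_antitone eps eps' y x x' : eps' < eps ->
  S_eps C f h eps y x -> S_eps C f h eps' y x' -> f2 f y x <= f2 f y x'.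
Proof. exact: argmin_penalty_antitone. Qed.

Lemma f2_S_eps_le_S_tilde eps y x x' : 0 < eps ->
  S_eps C f h eps y x -> S_tilde C f h y x' -> f2 f y x <= f2 f y x'.
Proof. by move=> eps0 Sx [Sx' _]; exact: argmin_penalty_le Sx Sx'. Qed.

End Bilevel.

Theorem lemma4p2 (R : realType) (n m : nat)
  (K : set 'rV[R]_n) (C : set 'rV[R]_m)
  (f h : 'rV[R]_n -> 'rV[R]_m -> R)
  (hK0 : K !=set0) (hKconv : convex_set_in K) (hKcl : closed K)
  (hKb : bounded_set K)
  (hC0 : C !=set0) (hCconv : convex_set_in C) (hCcl : closed C)
  (hCb : bounded_set C)
  (hfc : continuous (fun p : 'rV[R]_n * 'rV[R]_m => f p.1 p.2))
  (hhc : continuous (fun p : 'rV[R]_n * 'rV[R]_m => h p.1 p.2))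
  (hfconv : forall y, K y -> convex_fun_on (f y))
  (hhconv : forall y, K y -> convex_fun_on (h y))
  (hfpos : forall y x, 0 < f y x)
  (eps eps' : R) (heps' : 0 < eps') (heps : eps' < eps)
  (ye ye' : 'rV[R]_n) (xe xe' : 'rV[R]_m)
  (hye : optimal_P_eps C f h K eps ye)
  (hye' : optimal_P_eps C f h K eps' ye')
  (hxe : S_eps C f h eps ye xe) (hxe' : S_eps C f h eps' ye' xe')
  (ys : 'rV[R]_n) (xs : 'rV[R]_m)
  (hys : optimal_P_tilde C f h K ys) (hxs : S_ C h ys xs) :
  f2 f ye xe <= f2 f ye' xe' /\ f2 f ye' xe' <= f2 f ys xs.
Proof.
have cC := bounded_closed_compact hCb hCcl.
split.
  have [xe1 Sxe1] := S_eps_nonempty hC0 cC hfc hhc eps' ye.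
  apply: le_trans (f2_S_eps_antitone heps hxe Sxe1) _.
  by rewrite ler_f2 //; apply: hye'.2 hxe' hye.1 Sxe1.
have [xt St] := S_tilde_nonempty hC0 cC hfc hhc ye'.
have [xs' [Sxs' minxs']] := S_tilde_nonempty hC0 cC hfc hhc ys.
apply: le_trans (f2_S_eps_le_S_tilde heps' hxe' St) _.
apply: le_trans (minxs' _ hxs).
by rewrite ler_f2 //; apply: hys.2 (conj Sxs' minxs') hye'.1 St.
Qed.
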